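(* Let $D$ be a $3$-dicritical digraph that is not a bidirected odd cycle. Then the bidirected part $B(D)$ is a forest.
   Context: Digraphs are finite, with no loops and no parallel arcs; a digon is a pair of arcs $uv,vu$. A $2$-dicolouring of $D$ is a map $V(D)\to\{1,2\}$ such that each colour class induces an acyclic subdigraph. $D$ is $3$-dicritical if $D$ has no $2$-dicolouring but every proper subdigraph has one. The bidirected part $B(D)$ is the undirected graph on $V(D)$ in which $u,v$ are adjacent iff $D$ contains both arcs $uv$ and $vu$. A bidirected odd cycle is the digraph obtained from an odd (undirected) cycle by replacing every edge with a digon. *)

From mathcomp Require Import all_boot.
Set Implicit Arguments. Unset Strict Implicit. Unset Printing Implicit Defensive.

(* A digraph on a finite vertex type V is given by its arc relation
   [a : rel V] (no parallel arcs by construction); loopless = irreflexive. *)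
Definition loopless (V : finType) (a : rel V) : Prop := forall x, ~~ a x x.

Definition subdigraph (V : finType) (a : rel V) (S : {set V}) (A : rel V) : Prop :=
  forall u v, A u v -> [/\ a u v, u \in S & v \in S].

Definition proper_subdigraph (V : finType) (a : rel V) (S : {set V}) (A : rel V)
  : Prop :=
  subdigraph a S A /\ (S != setT \/ exists u v, a u v && ~~ A u v).

Definition has_dicycle_in (V : finType) (S : {set V}) (A : rel V) (P : pred V)
  : Prop :=
  exists c : seq V, [/\ c != [::], uniq c, all (fun x => (x \in S) && P x) c
                       & cycle A c].

(* A 2-dicolouring of (S, A): colours {1,2} encoded by bool; each colour class
   induces an acyclic subdigraph. *)
Definition two_dicolouring (V : finType) (S : {set V}) (A : rel V) (f : V -> bool)
  : Prop :=
  forall i : bool, ~ has_dicycle_in S A (fun x => f x == i).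

Definition two_dicolourable (V : finType) (S : {set V}) (A : rel V) : Prop :=
  exists f : V -> bool, two_dicolouring S A f.

Definition dicritical3 (V : finType) (a : rel V) : Prop :=
  ~ two_dicolourable setT a /\
  forall S A, proper_subdigraph a S A -> two_dicolourable S A.

Definition bidirected_part (V : finType) (a : rel V) : rel V :=
  fun u v => a u v && a v u.

(* An undirected simple graph g (symmetric relation) is a forest iff it
   contains no cycle: no sequence of >= 3 distinct vertices that is
   cyclically consecutive along edges. *)
Definition forest (V : finType) (g : rel V) : Prop :=
  ~ exists c : seq V, [/\ 3 <= size c, uniq c & cycle g c].

(* D is (isomorphic to) a bidirected odd cycle: its vertices can be listed
   cyclically as c (odd length >= 3) and its arcs are exactly the pairs of
   cyclically consecutive vertices, in both directions. *)
Definition bidirected_odd_cycle (V : finType) (a : rel V) : Prop :=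
  exists c : seq V, [/\ uniq c, forall x, x \in c, odd (size c), 3 <= size c
    & forall u v, a u v = (v == next c u) || (u == next c v)].

From mathcomp Require Import all_boot.

Set Implicit Arguments. Unset Strict Implicit. Unset Printing Implicit Defensive.

(** A 2-dicolouring gives the two ends of every digon different colours, a digon
   being a directed cycle of length 2.  If B(D) contained an odd cycle C, the
   bidirected odd cycle on C would be a subdigraph of D without 2-dicolouring,
   so by criticality it is D itself.  If B(D) contained an even cycle C through
   the arc xy, a 2-dicolouring of D - xy must give x and y the same colour
   (otherwise it colours D); but the path C - xy from y to x consists of digons
   of D - xy and has odd length, so its colours alternate and x, y differ. *)

Lemma alternating_path_last (V : Type) (f : V -> bool) z s :
  path (fun u w => f u != f w) z s -> f (last z s) = f z (+) odd (size s).
Proof.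
elim: s z => [|w s IH] z /=; first by rewrite addbF.
by case/andP=> fzw /IH ->; case: (f z) (f w) fzw => [] [] //=; case: odd.
Qed.

Lemma alternating_cycle_even (V : Type) (f : V -> bool) c :
  cycle (fun u w => f u != f w) c -> ~~ odd (size c).
Proof.
case: c => // x c /= alt; have := alternating_path_last alt.
by rewrite last_rcons size_rcons /=; case: (f x); case: odd.
Qed.

Section Dicolouring.

Variable V : finType.

Lemma two_dicolouring_digon (S : {set V}) (A : rel V) (f : V -> bool) u w :
  two_dicolouring S A f -> u \in S -> w \in S -> A u w -> A w u -> f u != f w.
Proof.
move=> hf uS wS Auw Awu; apply/negP => /eqP fuw; apply: (hf (f u)).
have [eq_uw|neq_uw] := eqVneq u w.
  by subst w; exists [:: u]; split; rewrite //= ?uS ?eqxx ?Auw.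
by exists [:: u; w]; split; rewrite //= ?inE ?neq_uw ?uS ?wS ?fuw ?eqxx ?Auw ?Awu.
Qed.

Lemma two_dicolouring_monochromatic_subrel (S : {set V}) (a A : rel V)
    (f : V -> bool) :
  (forall u v, a u v -> f u = f v -> A u v) ->
  two_dicolouring S A f -> two_dicolouring S a f.
Proof.
move=> aA hf i [c [c0 uc Pc ac]]; apply: (hf i); exists c; split => //.
apply: (sub_in_cycle (P := fun z => f z == i) _ _ ac).
  by move=> u v /eqP fu /eqP fv /aA; apply; rewrite fu fv.
by apply/allP => z /(allP Pc) /andP [].
Qed.

Lemma not_proper_subdigraph (a : rel V) (S : {set V}) (A : rel V) :
  subdigraph a S A -> ~ proper_subdigraph a S A -> S = setT /\ a =2 A.
Proof.
move=> sub not_proper; split.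
  by apply/eqP/negPn/negP => S_neq; apply: not_proper; split; [exact: sub | left].
move=> u v; apply/idP/idP => [auv|]; last by case/sub.
apply/negPn/negP => nA; apply: not_proper; split; first exact: sub.
by right; exists u, v; rewrite auv.
Qed.

Definition cycle_digons (c : seq V) : rel V :=
  fun u v => [&& u \in c, v \in c & (v == next c u) || (u == next c v)].

Lemma bidirected_cycle_subdigraph (a : rel V) (c : seq V) :
  cycle (bidirected_part a) c -> subdigraph a [set z in c] (cycle_digons c).
Proof.
move=> cc u v /and3P [uc vc /orP [/eqP ->|/eqP ->]]; rewrite !inE mem_next.
- by case/andP: (next_cycle cc uc).
- by case/andP: (next_cycle cc vc).
Qed.

Lemma odd_cycle_digons_not_two_dicolourable (c : seq V) :
  uniq c -> odd (size c) -> ~ two_dicolourable [set z in c] (cycle_digons c).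
Proof.
move=> uc oc [f hf]; move: oc; apply/negP/(alternating_cycle_even (f := f)).
apply: (sub_in_cycle (P := mem c) _ _ (cycle_next uc)); last exact/allP.
move=> u v u_c _ /eqP <-; apply: (two_dicolouring_digon hf); rewrite ?inE ?mem_next //.
- by rewrite /cycle_digons mem_next u_c eqxx.
- by rewrite /cycle_digons mem_next u_c eqxx orbT.
Qed.

Lemma dicritical_odd_bidirected_cycle (a : rel V) (c : seq V) :
  dicritical3 a -> uniq c -> odd (size c) -> 3 <= size c ->
  cycle (bidirected_part a) c -> bidirected_odd_cycle a.
Proof.
move=> [_ crit] uc oc c3 cc.
have not_proper : ~ proper_subdigraph a [set z in c] (cycle_digons c).
  by move=> /crit; apply: odd_cycle_digons_not_two_dicolourable.
have [cT a_eq] := not_proper_subdigraph (bidirected_cycle_subdigraph cc) not_proper.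
have c_full x : x \in c by have := in_setT x; rewrite -cT inE.
by exists c; split => // u v; rewrite a_eq /cycle_digons !c_full.
Qed.

Definition delete_arc (a : rel V) (x y : V) : rel V :=
  fun u v => a u v && ((u != x) || (v != y)).

Lemma dicritical_delete_arc (a : rel V) x y :
  dicritical3 a -> a x y ->
  exists2 f, two_dicolouring setT (delete_arc a x y) f & f x = f y.
Proof.
move=> [not_col crit] axy.
have [|f hf] := crit setT (delete_arc a x y).
  split; first by move=> u v /andP [auv _]; rewrite !inE.
  by right; exists x, y; rewrite /delete_arc axy !eqxx.
have [|fxy] := eqVneq (f x) (f y); first by exists f.
case: not_col; exists f; apply: two_dicolouring_monochromatic_subrel hf => u v auv fuv.
rewrite /delete_arc auv; apply: contraNT fxy => /norP [/negbNE/eqP <- /negbNE/eqP <-].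
by rewrite fuv.
Qed.

Lemma delete_arc_digon (a : rel V) x y (f : V -> bool) u v :
  two_dicolouring setT (delete_arc a x y) f -> bidirected_part a u v ->
  (u != x) || (v != y) -> (v != x) || (u != y) -> f u != f v.
Proof.
move=> hf /andP [auv avu] uv vu.
by apply: (two_dicolouring_digon hf); rewrite ?inE // /delete_arc ?auv ?avu.
Qed.

Lemma dicritical_no_even_bidirected_cycle (a : rel V) (c : seq V) :
  dicritical3 a -> uniq c -> ~~ odd (size c) -> 3 <= size c ->
  ~ cycle (bidirected_part a) c.
Proof.
case: c => [|x [|y p]] // dcrit uc ec c3.
have z_p : last y p \in p by case: p {uc ec} c3 => // w q _; exact: (mem_last w q).
rewrite /cycle rcons_path /= => /andP [/andP [/andP [axy _] path_yp] zx].
have [f hf fxy] := dicritical_delete_arc dcrit axy.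
have /and3P [x_yp y_p _] := uc; move: x_yp; rewrite inE negb_or => /andP [neq_xy x_p].
set z := last y p in z_p zx.
have neq_zx : z != x by apply: contraTneq z_p => ->.
have neq_zy : z != y by apply: contraTneq z_p => ->.
have fzx : f z != f x by apply: (delete_arc_digon hf zx); rewrite ?neq_zx ?neq_zy ?orbT.
have alt : path (fun u v => f u != f v) y p.
  apply: (sub_in_path (P := predC1 x) _ _ path_yp).
    by move=> u v; rewrite !inE => ux vx uv; apply: (delete_arc_digon hf uv); rewrite ?ux ?vx.
  by rewrite /= eq_sym neq_xy; apply/allP => u up; apply: contraTneq up => ->.
move: fzx; rewrite (alternating_path_last alt) fxy.
by move: ec; rewrite /= negbK => /negPf ->; rewrite addbF eqxx.
Qed.

End Dicolouring.

Theorem proposition28 (V : finType) (a : rel V) :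
  loopless a -> dicritical3 a -> ~ bidirected_odd_cycle a ->
  forest (bidirected_part a).
Proof.
move=> _ dcrit not_odd_cycle [c [c3 uc cc]].
have [oc|ec] := boolP (odd (size c)).
- exact: not_odd_cycle (dicritical_odd_bidirected_cycle dcrit uc oc c3 cc).
- exact: dicritical_no_even_bidirected_cycle dcrit uc ec c3 cc.
Qed.
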